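(* Let Alice hold a string $A$ and Bob hold strings $B_1,\ldots,B_k$, and let $\ell=\max_i\mathrm{LCP}(A,B_i)$. Using a randomized public-coin protocol, they can find a number $\ell'\ge\ell$ such that either (1) $\ell'\le\ell^2$, using $O(\lg\lg\ell)$ rounds and $O(\lg\lg\ell\,\lg k)$ total communication, or (2) $\ell'\le|A|^2$, using $O(1)$ rounds and $O(\lg\lg\lg|A|)$ total communication.
   Context: $\mathrm{LCP}(X,Y)$ is the length of the longest common prefix of $X$ and $Y$. In the public-coin model the parties share an infinite string of independent unbiased random bits, and the result must be correct with probability at least a fixed constant greater than $1/2$. *)

From HB Require Import structures.
From mathcomp Require Import all_boot all_order all_algebra.
From mathcomp Require Import all_classical all_reals all_analysis.
Set Implicit Arguments. Unset Strict Implicit. Unset Printing Implicit Defensive.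
Import Order.TTheory GRing.Theory Num.Theory.

Fixpoint lcp (T : eqType) (X Y : seq T) : nat :=
  match X, Y with
  | x :: X', y :: Y' => if x == y then (lcp X' Y').+1 else 0
  | _, _ => 0
  end.

Definition maxlcp (T : eqType) (A : seq T) (Bs : seq (seq T)) : nat :=
  \max_(B <- Bs) lcp A B.

(* binary logarithm (floor), lg 0 = lg 1 = 0 *)
Definition lg (n : nat) : nat := trunc_log 2 n.

Definition coins := nat -> bool.
Definition transcript := seq (seq bool).

(* Each round, the speaker (determined by the public coins and the transcript)
   sends a bit string computed from its own input, the public coins and the
   transcript; the protocol stops when [halt] (a function of public
   information) holds, and the common answer is [output]. *)
Record protocol (T : Type) := Protocol {
  speaker : coins -> transcript -> bool;  (* true = Alice speaks *)
  alice_msg : seq T -> coins -> transcript -> seq bool;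
  bob_msg : seq (seq T) -> coins -> transcript -> seq bool;
  halt : coins -> transcript -> bool;
  output : coins -> transcript -> nat
}.

Fixpoint run (T : Type) (P : protocol T) (A : seq T) (Bs : seq (seq T))
    (r : coins) (n : nat) : transcript :=
  match n with
  | 0 => [::]
  | n'.+1 =>
    let tr := run P A Bs r n' in
    if halt P r tr then tr
    else rcons tr (if speaker P r tr then alice_msg P A r tr
                   else bob_msg P Bs r tr)
  end.

(* total communication: each message costs its length plus one (delimiter) *)
Definition comm (tr : transcript) : nat := \sum_(m <- tr) (size m).+1.

Definition run_ok (T : Type) (P : protocol T) (A : seq T) (Bs : seq (seq T))
    (r : coins) (t c : nat) (Q : nat -> bool) : Prop :=
  let tr := run P A Bs r t in
  [/\ halt P r tr, comm tr <= c & Q (output P r tr)].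

(* The i-th bit of the binary expansion of x in [0,1): uniform x in [0,1)
   yields i.i.d. unbiased bits (the public random string). *)
Definition bits (R : realType) (x : R) : coins :=
  fun i => odd `|Num.floor (x * 2 ^+ i.+1)|%N.

Local Open Scope classical_set_scope.
Local Open Scope ring_scope.

Definition succ_prob_ge (R : realType) (T : Type) (P : protocol T)
    (A : seq T) (Bs : seq (seq T)) (t c : nat) (Q : nat -> bool) (p : R)
    : Prop :=
  let S : set (measurableTypeR R) :=
    [set x : R | 0 <= x < 1 /\ run_ok P A Bs (bits x) t c Q] in
  measurable S /\ (p%:E <= lebesgue_measure S)%E.

From HB Require Import structures.
From mathcomp Require Import all_boot all_order all_algebra.
From mathcomp Require Import all_classical all_reals all_analysis.
From mathcomp Require Import zify lra.
Import Order.TTheory GRing.Theory Num.Theory.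
Set Implicit Arguments. Unset Strict Implicit. Unset Printing Implicit Defensive.

(* Protocol (1) is an exponential search over the prefix lengths
   [1, 2, 4, 16, ..., 2 ^ 2 ^ j]: in round [j] Alice sends an [m]-bit random
   GF(2)-linear hash of her prefix of that length, [m = lg k + 3], and Bob
   answers whether it is the hash of the same prefix of some [B_i]. Prefixes of
   length at most [l] always match, so the search reaches the first length
   [L > l], after at most [lg (lg l) + 2] rounds; there a false match has
   probability at most [k 2 ^ - m <= 1/4] by the union bound, and otherwise
   the output [L - 1] lies in [[l, l ^ 2]].
   Protocol (2) is deterministic: Alice sends [lg (lg |A|)], which takes
   [lg (lg (lg |A|)) + O(1)] bits, and the answer is the next double power of
   two above [|A|], which is at most [|A| ^ 2].
   Probabilities over the uniform [x] in [[0, 1)] are computed by counting the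
   [2 ^ N] values of the first [N] binary digits of [x], which determine the
   run. *)

Definition ccons (b : bool) (r : coins) : coins :=
  fun i => if i is i'.+1 then r i' else b.

Definition prefix_local (U : Type) (N : nat) (phi : coins -> U) :=
  forall r r', (forall i, i < N -> r i = r' i) -> phi r = phi r'.

Fixpoint coin_sum (N : nat) (phi : coins -> nat) : nat :=
  if N is N'.+1 then
    coin_sum N' (fun r => phi (ccons false r)) + coin_sum N' (fun r => phi (ccons true r))
  else phi (fun _ => false).

(* The binary digits of [F], most significant first, as are those of
   [x * 2 ^ N] in [bits x]. *)
Definition coins_of_nat (N F : nat) : coins := fun i => odd (F %/ 2 ^ (N.-1 - i)).

Lemma prefix_local_leq (U : Type) N N' (phi : coins -> U) :
  N <= N' -> prefix_local N phi -> prefix_local N' phi.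
Proof. by move=> leNN' phiN r r' eq_r; apply: phiN => i ltiN; apply/eq_r/(leq_trans ltiN). Qed.

Lemma prefix_local_ccons (U : Type) N (phi : coins -> U) b :
  prefix_local N.+1 phi -> prefix_local N (fun r => phi (ccons b r)).
Proof. by move=> phiN r r' eq_r; apply: phiN => -[|i] //= /eq_r. Qed.

Lemma eq_coin_sum N phi psi : (forall r, phi r = psi r) -> coin_sum N phi = coin_sum N psi.
Proof. by move=> eq_phi; congr coin_sum; apply: funext. Qed.

Lemma leq_coin_sum N phi psi : (forall r, phi r <= psi r) -> coin_sum N phi <= coin_sum N psi.
Proof.
elim: N phi psi => [|N IH] phi psi le_phi /=; first exact: le_phi.
by apply: leq_add; apply: IH.
Qed.

Lemma coin_sumD N phi psi :
  coin_sum N (fun r => phi r + psi r) = coin_sum N phi + coin_sum N psi.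
Proof. by elim: N phi psi => [|N IH] phi psi //=; rewrite !IH addnACA. Qed.

Lemma coin_sum_const N c : coin_sum N (fun _ => c) = c * 2 ^ N.
Proof. by elim: N => [|N IH] /=; rewrite ?muln1 // IH expnS; lia. Qed.

Lemma coin_sum_distrl N phi c : coin_sum N (fun r => phi r * c) = coin_sum N phi * c.
Proof. by elim: N phi => [|N IH] phi //=; rewrite !IH mulnDl. Qed.

Lemma coin_sum_enum N phi :
  prefix_local N phi -> coin_sum N phi = \sum_(0 <= F < 2 ^ N) phi (coins_of_nat N F).
Proof.
elim: N phi => [|N IH] phi phiN /=.
  by rewrite expn0 big_nat1; apply: phiN.
rewrite (IH _ (prefix_local_ccons false phiN)) (IH _ (prefix_local_ccons true phiN)).
rewrite expnS mul2n -addnn.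
rewrite [RHS](big_cat_nat _ (n := 2 ^ N)) ?leq_addr //=.
rewrite -{4}(add0n (2 ^ N)) big_addn addnK.
congr (_ + _); apply: eq_big_nat => F /andP[_ ltF]; apply: phiN => -[|i] ltiN /=.
- by rewrite /coins_of_nat subn0 divn_small.
- by rewrite /coins_of_nat /=; have -> : N - i.+1 = N.-1 - i by lia.
- by rewrite /coins_of_nat /= subn0 -[X in _ + X]mul1n divnDMl ?expn_gt0 // divn_small.
- rewrite /coins_of_nat /=; have -> : N - i.+1 = N.-1 - i by lia.
  have -> : 2 ^ N = 2 ^ i.+1 * 2 ^ (N.-1 - i).
    by rewrite -expnD; congr (_ ^ _); rewrite ltnS in ltiN; lia.
  by rewrite divnDMl ?expn_gt0 // oddD oddX /= addbF.
Qed.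

Definition coins_cat (a : nat) (r0 r1 : coins) : coins :=
  fun i => if i < a then r0 i else r1 (i - a).

Lemma coin_sum_cat a b phi :
  coin_sum (a + b) phi = coin_sum a (fun r0 => coin_sum b (fun r1 => phi (coins_cat a r0 r1))).
Proof.
elim: a phi => [|a IH] phi /=.
  by congr coin_sum; apply: funext => r1; congr phi; apply: funext => i; rewrite /coins_cat subn0.
rewrite !IH; congr (coin_sum _ _ + coin_sum _ _); apply: funext => r0;
  congr coin_sum; apply: funext => r1; congr phi; apply: funext => -[|i] //=;
  rewrite /coins_cat /= ltnS subSS.
Qed.

Lemma coin_sum_prefix_eq m (e : nat -> bool) :
  coin_sum m (fun r => all (fun t => r t == e t) (iota 0 m)) = 1.
Proof.
elim: m e => [|m IH] e //=.
have split_head b r : nat_of_bool (all (fun t => ccons b r t == e t) (iota 0 m.+1)) =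
    all (fun t => r t == e t.+1) (iota 0 m) * (b == e 0).
  rewrite /= -(addn0 1) iotaDl all_map (@eq_all _ _ (fun t => r t == e t.+1)) //.
  by case: (b == e 0); case: all.
rewrite !(eq_coin_sum _ (split_head _)) !coin_sum_distrl IH.
by case: (e 0).
Qed.

Lemma coin_sum_has (V : eqType) N (P : coins -> V -> bool) (s : seq V) c :
  (forall v, v \in s -> coin_sum N (P ^~ v) <= c) ->
  coin_sum N (fun r => has (P r) s) <= size s * c.
Proof.
elim: s => [|v s IH] le_c /=; first by rewrite coin_sum_const.
apply: (@leq_trans (coin_sum N (P ^~ v) + coin_sum N (fun r => has (P r) s))).
  by rewrite -coin_sumD; apply: leq_coin_sum => r; case: (P r v); case: has.
rewrite mulSn leq_add ?le_c ?mem_head // IH // => w ws.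
by rewrite le_c // inE ws orbT.
Qed.

Section CoinMeasure.
Variable R : realType.
Local Open Scope ring_scope.
Local Open Scope classical_set_scope.

Lemma bits_coins_of_nat N M (x : R) i :
  M%:R <= x * 2 ^+ N < M.+1%:R -> (i < N)%N ->
  bits x i = coins_of_nat N M i.
Proof.
move=> /andP[leMx ltxM] ltiN.
set d := (2 ^ (N.-1 - i))%N.
have d_gt0 : (0 : R) < d%:R by rewrite ltr0n expn_gt0.
have expN : (2 : R) ^+ N = 2 ^+ i.+1 * d%:R.
  by rewrite -!natrX -natrM -expnD; congr (_ ^ _)%:R; lia.
rewrite /bits /coins_of_nat -/d.
suff -> : Num.floor (x * 2 ^+ i.+1) = (M %/ d)%N%:Z by rewrite absz_nat.
apply: floor_def; apply/andP; split.
- rewrite -(ler_pM2r d_gt0) -mulrA -expN; apply: le_trans leMx.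
  by rewrite -pmulrn -natrM ler_nat leq_divM.
- rewrite -(ltr_pM2r d_gt0) -mulrA -expN; apply: lt_le_trans ltxM _.
  by rewrite -(PoszD _ 1) addn1 -pmulrn -natrM ler_nat ltn_ceil // expn_gt0.
Qed.

Definition prefix_set N (Q : coins -> bool) M : set (measurableTypeR R) :=
  [set x : R | 0 <= x /\ x * 2 ^+ N < M%:R /\ Q (bits x)].

Definition dyadic_cell N M : set (measurableTypeR R) :=
  `[M%:R / 2 ^+ N, M.+1%:R / 2 ^+ N[%classic.

Lemma prefix_setS N (Q : coins -> bool) M : prefix_local N Q ->
  prefix_set N Q M.+1 =
  prefix_set N Q M `|` (if Q (coins_of_nat N M) then dyadic_cell N M else set0).
Proof.
move=> QN; have exp_gt0 : (0 : R) < 2 ^+ N by rewrite exprn_gt0.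
have QM (x : R) : M%:R <= x * 2 ^+ N < M.+1%:R -> Q (bits x) = Q (coins_of_nat N M).
  by move=> xM; apply: QN => i ltiN; apply: bits_coins_of_nat.
apply/seteqP; split => x /=.
- move=> [x_ge0 [ltxM Qx]].
  case: (ltP (x * 2 ^+ N) M%:R) => leMx; first by left.
  right; rewrite -(QM x) ?leMx // Qx /dyadic_cell /= in_itv /= ler_pdivrMr // ltr_pdivlMr //.
  by rewrite leMx.
- case=> [[x_ge0 [ltxM Qx]]|].
    by split => //; split => //; apply: lt_trans ltxM _; rewrite ltr_nat.
  case: ifP => QMb //=; rewrite /dyadic_cell /= in_itv /= ler_pdivrMr // ltr_pdivlMr //.
  move=> xM; case/andP: (xM) => leMx ltxM; split; last by rewrite QM.
  by rewrite -(pmulr_lge0 _ exp_gt0); apply: le_trans leMx.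
Qed.

Lemma lebesgue_measure_prefix_set N (Q : coins -> bool) M :
  prefix_local N Q -> (M <= 2 ^ N)%N ->
  measurable (prefix_set N Q M) /\
  lebesgue_measure (prefix_set N Q M) =
    ((\sum_(0 <= F < M) Q (coins_of_nat N F))%:R / 2 ^+ N)%:E.
Proof.
move=> QN; elim: M => [|M IH] leMN.
  have -> : prefix_set N Q 0 = set0.
    apply/seteqP; split => x //= [x_ge0 [+ _]].
    by rewrite ltNge mulr_ge0 // exprn_ge0.
  by rewrite big_geq // mul0r measure0.
have [mS muS] := IH (ltnW leMN).
have exp_gt0 : (0 : R) < 2 ^+ N by rewrite exprn_gt0.
set I := if Q (coins_of_nat N M) then dyadic_cell N M else set0.
have mI : measurable I by rewrite /I; case: ifP => _ //; exact: measurable_itv.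
rewrite prefix_setS //; split; first exact: measurableU.
rewrite measureU //; last first.
  apply/seteqP; split => x //= [[_ [ltxM _]]]; rewrite /I; case: ifP => // _.
  by rewrite /dyadic_cell /= in_itv /= ler_pdivrMr // leNgt ltxM.
rewrite -[LHS]/(lebesgue_measure (prefix_set N Q M) + lebesgue_measure I)%E.
rewrite muS big_nat_recr //= natrD mulrDl EFinD; congr (_ + _)%E.
rewrite /I; case: ifP => _ /=; last by rewrite measure0 mul0r.
rewrite lebesgue_measure_itv /= lte_fin ltr_pM2r ?invr_gt0 // ltr_nat ltnSn.
by rewrite -EFinB -mulrBl -natrB // subSnn mul1r.
Qed.

Lemma lebesgue_measure_coin_event N (Q : coins -> bool) :
  prefix_local N Q ->
  let S : set (measurableTypeR R) := [set x : R | 0 <= x < 1 /\ Q (bits x)] in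
  measurable S /\ lebesgue_measure S = ((coin_sum N (fun r => Q r))%:R / 2 ^+ N)%:E.
Proof.
move=> QN /=; have [] := lebesgue_measure_prefix_set QN (leqnn (2 ^ N)).
have -> : prefix_set N Q (2 ^ N) = [set x : R | 0 <= x < 1 /\ Q (bits x)].
  have exp_gt0 : (0 : R) < 2 ^+ N by rewrite exprn_gt0.
  rewrite /prefix_set natrX; apply/seteqP; split => x /=.
  - by case=> x_ge0 [ltxN Qx]; rewrite x_ge0 -(ltr_pM2r exp_gt0) mul1r.
  - by case=> /andP[x_ge0 ltx1] Qx; rewrite gtr_pMl.
move=> mS ->; rewrite coin_sum_enum // => r r' eq_r; by rewrite (QN r r').
Qed.

End CoinMeasure.

Definition run_okb (T : Type) (P : protocol T) (A : seq T) (Bs : seq (seq T))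
    (r : coins) (t c : nat) (Q : nat -> bool) : bool :=
  let tr := run P A Bs r t in
  [&& halt P r tr, comm tr <= c & Q (output P r tr)].

Lemma succ_prob_ge_of_coin_sum (R : realType) (T : Type) (P : protocol T) A Bs t c Q N a b :
  0 < b -> prefix_local N (fun r => run_okb P A Bs r t c Q) ->
  a * 2 ^ N <= b * coin_sum N (fun r => run_okb P A Bs r t c Q) ->
  succ_prob_ge P A Bs t c Q (a%:R / b%:R : R).
Proof.
move=> b_gt0 okN le_ab; rewrite /succ_prob_ge.
have -> : [set x : R | (0 <= x < 1)%R /\ run_ok P A Bs (bits x) t c Q]%classic =
          [set x : R | (0 <= x < 1)%R /\ run_okb P A Bs (bits x) t c Q]%classic.
  by apply/seteqP; split => x /= [x01 ok]; split => //; apply/and3P.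
have [mS ->] := lebesgue_measure_coin_event R okN.
split => //; rewrite lee_fin ler_pdivlMr ?exprn_gt0 //.
by rewrite mulrAC ler_pdivrMr ?ltr0n // -natrX -!natrM ler_nat [_ * b]mulnC.
Qed.

Lemma runS (T : Type) (P : protocol T) A Bs r n :
  run P A Bs r n.+1 =
  if halt P r (run P A Bs r n) then run P A Bs r n
  else rcons (run P A Bs r n) (if speaker P r (run P A Bs r n)
       then alice_msg P A r (run P A Bs r n) else bob_msg P Bs r (run P A Bs r n)).
Proof. by []. Qed.

Lemma run_halted (T : Type) (P : protocol T) A Bs r n d :
  halt P r (run P A Bs r n) -> run P A Bs r (n + d) = run P A Bs r n.
Proof.
move=> halted; elim: d => [|d IH]; first by rewrite addn0.
by rewrite addnS /= IH halted.
Qed.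

Lemma comm_cons x s : comm (x :: s) = (size x).+1 + comm s.
Proof. by rewrite /comm big_cons. Qed.

Lemma comm_rcons s x : comm (rcons s x) = comm s + (size x).+1.
Proof. by rewrite /comm -cats1 big_cat big_seq1. Qed.

Lemma leq_lcp_size (T : eqType) (X Y : seq T) : lcp X Y <= size X.
Proof. by elim: X Y => [|x X IH] [|y Y] //=; case: eqP => // _; apply: IH. Qed.

Lemma take_lcp (T : eqType) (X Y : seq T) L : L <= lcp X Y -> take L X = take L Y.
Proof.
by elim: X Y L => [|x X IH] [|y Y] [|L] //=; case: eqP => // -> /IH ->.
Qed.

Lemma take_eq_leq_lcp (T : eqType) (X Y : seq T) L :
  L <= size X -> take L X = take L Y -> L <= lcp X Y.
Proof.
by elim: X Y L => [|x X IH] [|y Y] [|L] //= leLX [-> /(IH _ _ leLX)]; rewrite eqxx.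
Qed.

Lemma leq_lcp_maxlcp (T : eqType) (A : seq T) Bs B : B \in Bs -> lcp A B <= maxlcp A Bs.
Proof. by move=> BBs; apply: leq_bigmax_seq. Qed.

Lemma leq_maxlcp_size (T : eqType) (A : seq T) Bs : maxlcp A Bs <= size A.
Proof.
rewrite /maxlcp; elim: Bs => [|B Bs IH]; first by rewrite big_nil.
by rewrite big_cons geq_max leq_lcp_size IH.
Qed.

Lemma maxlcp_witness (T : eqType) (A : seq T) Bs L :
  0 < L -> L <= maxlcp A Bs -> exists2 B, B \in Bs & L <= lcp A B.
Proof.
rewrite /maxlcp; elim: Bs => [|B Bs IH] L_gt0; first by rewrite big_nil leqNgt L_gt0.
rewrite big_cons leq_max => /orP[leLB|/(IH L_gt0)[B' BBs leLB']].
  by exists B; rewrite ?mem_head.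
by exists B'; rewrite // inE BBs orbT.
Qed.

Lemma half_ltn_exp2 n k : n < 2 ^ k.+1 -> n./2 < 2 ^ k.
Proof. by rewrite ltn_half_double -mul2n -expnS. Qed.

Definition coins_drop (m : nat) (r : coins) : coins := fun i => r (i + m).

(* Bit [t] of the hash of [n] with fuel [f]: the inner product over GF(2) of the
   [f] low binary digits of [n] with the coins [r (t + m * i)], [i < f]. *)
Fixpoint lin_hash (m f n : nat) (r : coins) (t : nat) : bool :=
  if f is f'.+1 then (odd n && r t) (+) lin_hash m f' n./2 (coins_drop m r) t else false.

(* Since [n < 2 ^ n], fuel [n] always suffices, so Alice and Bob can hash
   without agreeing on a bound for the values hashed. *)
Definition hash (m n : nat) (r : coins) : seq bool := [seq lin_hash m n n r t | t <- iota 0 m].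

Lemma size_hash m n r : size (hash m n r) = m.
Proof. by rewrite size_map size_iota. Qed.

Lemma lin_hash0 m f r t : lin_hash m f 0 r t = false.
Proof. by elim: f r => [|f IH] r //=; rewrite IH. Qed.

Lemma lin_hash_fuel m f f' n r t :
  n < 2 ^ f -> n < 2 ^ f' -> lin_hash m f n r t = lin_hash m f' n r t.
Proof.
elim: f f' n r => [|f IH] f' n r.
  by rewrite expn0 ltnS leqn0 => /eqP-> _; rewrite !lin_hash0.
case: f' => [|f'] ltnf; first by rewrite expn0 ltnS leqn0 => /eqP->; rewrite !lin_hash0.
by move=> ltnf'; rewrite /= (IH f') ?half_ltn_exp2.
Qed.

Lemma lin_hash_local m f n t :
  t < m -> prefix_local (m * f) (fun r => lin_hash m f n r t).
Proof.
move=> ltm; elim: f n => [|f IH] n r r' eq_r //=.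
rewrite eq_r; last by rewrite mulnS ltn_addr.
by congr (_ (+) _); apply: IH => i lti; apply: eq_r; rewrite mulnS; lia.
Qed.

Lemma hash_local m n : prefix_local (m * n) (hash m n).
Proof.
move=> r r' eq_r; apply/eq_in_map => t; rewrite mem_iota => /andP[_ ltm].
exact: lin_hash_local.
Qed.

Lemma lin_hash_cat m f n r0 r1 t : t < m ->
  lin_hash m f.+1 n (coins_cat m r0 r1) t = (odd n && r0 t) (+) lin_hash m f n./2 r1 t.
Proof.
move=> ltm /=; rewrite /coins_cat ltm; congr (_ (+) lin_hash _ _ _ _ _).
by apply: funext => i; rewrite /coins_drop ltnNge leq_addl addnK.
Qed.

Lemma lin_hash_xor_cat m f u v r0 r1 t (e : bool) : t < m ->
  (lin_hash m f.+1 u (coins_cat m r0 r1) t (+) lin_hash m f.+1 v (coins_cat m r0 r1) t == e) =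
  (lin_hash m f u./2 r1 t (+) lin_hash m f v./2 r1 t == e (+) ((odd u (+) odd v) && r0 t)).
Proof.
move=> ltm; rewrite !lin_hash_cat //.
by case: (odd u) (odd v) (r0 t) e => [] [] [] [];
   case: (lin_hash _ _ u./2 _ _) (lin_hash _ _ v./2 _ _) => [] [].
Qed.

(* If [u] and [v] differ only in their lowest digit, the XOR of their hashes
   is the first block of [m] coins, which equals [e] for exactly one setting
   of it; otherwise induct on the higher digits. *)
Lemma lin_hash_xor_count m f u v (e : nat -> bool) :
  u != v -> u < 2 ^ f -> v < 2 ^ f ->
  coin_sum (m * f)
    (fun r => all (fun t => lin_hash m f u r t (+) lin_hash m f v r t == e t) (iota 0 m))
  <= 2 ^ (m * f.-1).
Proof.
elim: f u v e => [|f IH] u v e neq_uv.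
  by rewrite expn0 !ltnS !leqn0 => /eqP u0 /eqP v0; rewrite u0 v0 in neq_uv.
move=> ltu ltv; rewrite mulnS coin_sum_cat.
have split_first r0 r1 :
    nat_of_bool (all (fun t => lin_hash m f.+1 u (coins_cat m r0 r1) t
                         (+) lin_hash m f.+1 v (coins_cat m r0 r1) t == e t) (iota 0 m)) =
    all (fun t => lin_hash m f u./2 r1 t (+) lin_hash m f v./2 r1 t
                  == e t (+) ((odd u (+) odd v) && r0 t)) (iota 0 m).
  congr nat_of_bool; apply: eq_in_all => t.
  by rewrite mem_iota => /andP[_ ltm]; rewrite lin_hash_xor_cat.
under eq_coin_sum => r0 do rewrite (eq_coin_sum _ (split_first r0)).
case: (eqVneq u./2 v./2) => [eq_half|neq_half].
- have odd_uv : odd u (+) odd v.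
    apply: contraNT neq_uv => same_odd; apply/eqP.
    rewrite -(odd_double_half u) -(odd_double_half v) eq_half.
    by case: (odd u) (odd v) same_odd => [] [].
  rewrite eq_half odd_uv.
  have first_bit r0 r1 :
      nat_of_bool (all (fun t => lin_hash m f v./2 r1 t (+) lin_hash m f v./2 r1 t
                                 == e t (+) true && r0 t) (iota 0 m)) =
      all (fun t => r0 t == e t) (iota 0 m).
    by congr nat_of_bool; apply: eq_all => t; rewrite addbb; case: (e t) (r0 t) => [] [].
  under eq_coin_sum => r0 do rewrite (eq_coin_sum _ (first_bit r0)) coin_sum_const.
  by rewrite coin_sum_distrl coin_sum_prefix_eq mul1n.
- clear split_first; case: f IH ltu ltv => [|f] IH ltu ltv.
    have := half_ltn_exp2 ltu; have := half_ltn_exp2 ltv.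
    by rewrite expn0 !ltnS !leqn0 => /eqP v0 /eqP u0; rewrite u0 v0 in neq_half.
  apply: leq_trans (leq_coin_sum _ (psi := fun _ => 2 ^ (m * f)) _) _.
    by move=> r0; apply: IH; rewrite // half_ltn_exp2.
  by rewrite coin_sum_const -expnD /= mulnS addnC.
Qed.

Lemma eq_hash m f u v r : u < 2 ^ f -> v < 2 ^ f ->
  (hash m u r == hash m v r) =
  all (fun t => lin_hash m f u r t (+) lin_hash m f v r t == false) (iota 0 m).
Proof.
move=> ltu ltv; rewrite /hash; elim: (iota 0 m) => [|t s IH] //=.
have fuel n : n < 2 ^ f -> lin_hash m n n r t = lin_hash m f n r t.
  exact/lin_hash_fuel/ltn_expl.
rewrite eqseq_cons IH fuel // fuel //.
by case: (lin_hash m f u r t) (lin_hash m f v r t) => [] [].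
Qed.

Lemma hash_collision_count m f u v : u != v -> u < 2 ^ f -> v < 2 ^ f ->
  coin_sum (m * f) (fun r => hash m u r == hash m v r) <= 2 ^ (m * f.-1).
Proof.
move=> neq_uv ltu ltv; rewrite (eq_coin_sum _ (fun r => congr1 nat_of_bool (eq_hash m r ltu ltv))).
exact: lin_hash_xor_count.
Qed.

Fixpoint bin_digits (f n : nat) : seq bool :=
  if f is f'.+1 then (if n == 0 then [::] else odd n :: bin_digits f' n./2) else [::].

Definition enc_nat (n : nat) : seq bool := bin_digits n n.

Definition dec_nat (s : seq bool) : nat := foldr (fun (b : bool) acc => b + acc.*2) 0 s.

Lemma bin_digitsK f n : n < 2 ^ f -> dec_nat (bin_digits f n) = n.
Proof.
elim: f n => [|f IH] n /=; first by rewrite expn0 ltnS leqn0 => /eqP->.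
by case: eqP => [-> //|_ ltn] /=; rewrite IH ?half_ltn_exp2 // odd_double_half.
Qed.

Lemma enc_natK : cancel enc_nat dec_nat.
Proof. by move=> n; apply/bin_digitsK/ltn_expl. Qed.

Lemma size_bin_digits f n : size (bin_digits f n) <= (0 < n) + lg n.
Proof.
elim: f n => [|f IH] n //=; case: eqP => [//|/eqP n_neq0] /=.
case: (ltngtP n 1) => [|lt1n|->]; [by rewrite ltnS leqn0 (negPf n_neq0)| |by case: f {IH}].
have half_n_gt0 : 0 < n./2 by rewrite half_gt0.
rewrite /lg (trunc_log2S lt1n) add1n ltnS.
by apply: leq_trans (IH _) _; rewrite half_n_gt0 add1n.
Qed.

Lemma lg_add2 n : lg n.+2 <= (lg n).+1.
Proof.
rewrite leqNgt; apply/negP => lt_lg.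
have lt_n := trunc_log_ltn n (isT : 1 < 2).
have le_n2 : 2 ^ (lg n).+2 <= n.+2.
  by apply: leq_trans (trunc_logP (isT : 1 < 2) (isT : 0 < n.+2)); rewrite leq_exp2l.
move: lt_n le_n2; rewrite /lg !expnS; have := expn_gt0 2 (trunc_log 2 n); lia.
Qed.

(* For [n >= 2] the decoded value is [2 ^ 2 ^ (lg (lg n) + 1)]; no double power
   of two lies in [[n, n ^ 2]] for [n <= 1], so these are sent as they are. *)
Definition size_code (n : nat) : nat := if n <= 1 then n else (lg (lg n)).+2.

Definition size_decode (w : nat) : nat := if w <= 1 then w else 2 ^ (2 ^ w.-1).

Lemma size_decode_code n : n <= size_decode (size_code n) <= n ^ 2.
Proof.
rewrite /size_code /size_decode; case: (leqP n 1) => [|lt1n] /=.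
  by case: n => [|[]].
have lgn_gt0 : 0 < lg n by rewrite trunc_log_gt0.
have ltn : n < 2 ^ (lg n).+1 := trunc_log_ltn n (isT : 1 < 2).
have lt_lgn : lg n < 2 ^ (lg (lg n)).+1 := trunc_log_ltn (lg n) (isT : 1 < 2).
have le_lgn : 2 ^ lg (lg n) <= lg n := trunc_logP (isT : 1 < 2) lgn_gt0.
have le_n : 2 ^ lg n <= n := trunc_logP (isT : 1 < 2) (ltnW lt1n).
apply/andP; split.
  by apply/ltnW/(leq_trans ltn); rewrite leq_exp2l.
apply: (@leq_trans (2 ^ (lg n * 2))); first by rewrite leq_exp2l // expnS; lia.
by rewrite expnM leq_exp2r.
Qed.

Definition size_protocol (T : Type) : protocol T :=
  Protocol (fun _ _ => true) (fun A _ _ => enc_nat (size_code (size A))) (fun _ _ _ => [::])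
    (fun _ tr => size tr != 0) (fun _ tr => size_decode (dec_nat (head [::] tr))).

Lemma size_protocol_ok (T : eqType) (A : seq T) Bs r :
  run_okb (size_protocol T) A Bs r 3 (3 * (lg (lg (lg (size A)))).+1)
    (fun l' => maxlcp A Bs <= l' <= size A ^ 2).
Proof.
rewrite /run_okb /= comm_cons /comm big_nil addn0 enc_natK.
have /andP[le_l le_sqr] := size_decode_code (size A).
rewrite (leq_trans (leq_maxlcp_size A Bs) le_l) le_sqr /= andbT.
apply: leq_ltn_trans (size_bin_digits _ _) _; rewrite /size_code.
case: (leqP (size A) 1) => [|_]; first by case: (size A) => [|[]].
have := lg_add2 (lg (lg (size A))); rewrite add1n; lia.
Qed.

Lemma size_protocol_succ (R : realType) (T : eqType) (A : seq T) Bs :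
  succ_prob_ge (size_protocol T) A Bs 3 (3 * (lg (lg (lg (size A)))).+1)
    (fun l' => maxlcp A Bs <= l' <= size A ^ 2) (1%R : R).
Proof.
rewrite -[1%R : R]divr1.
by apply: (@succ_prob_ge_of_coin_sum R T _ A Bs _ _ _ 0 1 1) => //=; rewrite size_protocol_ok.
Qed.

Definition guess (j : nat) : nat := if j is j'.+1 then 2 ^ (2 ^ j') else 1.

Definition hash_len (k : nat) : nat := (lg k).+3.

Lemma ltn_guess l : l < guess l.+1.
Proof. by apply: leq_trans (ltn_expl l (isT : 1 < 2)) _; rewrite leq_exp2l // ltnW // ltn_expl. Qed.

Lemma guess_index_bound l j : (forall i, i < j -> guess i <= l) -> j <= (lg (lg l)).+2.
Proof.
case: j => [|[|[|i]]] // le_guess.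
have le_l : 2 ^ (2 ^ i.+1) <= l := le_guess i.+2 (ltnSn _).
by rewrite !ltnS; apply/trunc_log_max/trunc_log_max.
Qed.

Lemma pred_guess_leq_sqr l j :
  l < guess j -> (forall i, i < j -> guess i <= l) -> (guess j).-1 <= l ^ 2.
Proof.
case: j => [|j] // lt_l le_guess; have le_j := le_guess j (ltnSn j).
apply: (@leq_trans (guess j ^ 2)); last by rewrite leq_exp2r.
case: j {lt_l le_guess} le_j => [|j] //= _.
by rewrite -expnM -expnSr leq_pred.
Qed.

Section LcpProtocol.
Variable T : countType.

Definition alice_hash (A : seq T) (m j : nat) (r : coins) : seq bool :=
  if guess j <= size A then hash m (pickle (take (guess j) A)) r else [::].

Definition bob_match (Bs : seq (seq T)) (m j : nat) (r : coins) (a : seq bool) : bool :=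
  (a != [::]) && has (fun B => hash m (pickle (take (guess j) B)) r == a) Bs.

(* Bob opens with [hash_len (size Bs)] ones, which tells Alice the hash length
   [m]. Round [j] is then Alice's hash of her prefix of length [guess j] (empty
   if [A] is shorter) followed by Bob's one-bit answer; after the first negative
   answer, at round [j], both output [guess j - 1]. *)
Definition lcp_protocol : protocol T := Protocol
  (fun _ tr => odd (size tr))
  (fun A r tr => alice_hash A (size (head [::] tr)) (size tr)./2 r)
  (fun Bs r tr => if size tr == 0 then nseq (hash_len (size Bs)) true
                  else [:: bob_match Bs (size (head [::] tr)) ((size tr)./2.-1) r (last [::] tr)])
  (fun _ tr => odd (size tr) && (last [::] tr == [:: false]))
  (fun _ tr => (guess ((size tr)./2.-1)).-1).

Variables (A : seq T) (Bs : seq (seq T)).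
Let m := hash_len (size Bs).
Let l := maxlcp A Bs.

Fixpoint matched_rounds (j : nat) (r : coins) : transcript :=
  if j is j'.+1 then rcons (rcons (matched_rounds j' r) (alice_hash A m j' r)) [:: true]
  else [::].

Lemma size_matched_rounds j r : size (matched_rounds j r) = j.*2.
Proof. by elim: j => [|j IH] //=; rewrite !size_rcons IH doubleS. Qed.

Lemma last_matched_rounds j r : last (nseq m true) (matched_rounds j r) != [:: false].
Proof. by case: j => [|j] /=; rewrite ?last_rcons. Qed.

Lemma size_alice_hash j r : size (alice_hash A m j r) <= m.
Proof. by rewrite /alice_hash; case: ifP; rewrite ?size_hash. Qed.

Lemma comm_matched_rounds j r : comm (matched_rounds j r) <= j * m.+3.
Proof.
elim: j => [|j IH] /=; first by rewrite /comm big_nil.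
by rewrite !comm_rcons mulSn /=; have := size_alice_hash j r; lia.
Qed.

Lemma run_round j r : run lcp_protocol A Bs r j.*2.+1 = nseq m true :: matched_rounds j r ->
  run lcp_protocol A Bs r j.*2.+3 =
    nseq m true :: rcons (rcons (matched_rounds j r) (alice_hash A m j r))
                  [:: bob_match Bs m j r (alice_hash A m j r)].
Proof.
move=> run_j; rewrite runS [run _ _ _ _ j.*2.+2]runS run_j /=.
rewrite !size_matched_rounds !odd_double /= (negbTE (last_matched_rounds j r)) /=.
rewrite !size_rcons !size_matched_rounds /= odd_double /= last_rcons !size_nseq.
by rewrite uphalf_double half_double.
Qed.

Lemma bob_match_short j r : guess j <= l -> bob_match Bs m j r (alice_hash A m j r).
Proof.
move=> le_l; have le_A : guess j <= size A := leq_trans le_l (leq_maxlcp_size A Bs).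
have guess_gt0 : 0 < guess j by case: j {le_l le_A} => //= j; rewrite expn_gt0.
have [B BBs le_B] := maxlcp_witness guess_gt0 le_l.
rewrite /bob_match /alice_hash le_A -size_eq0 size_hash /=.
by apply/hasP; exists B; rewrite // (take_lcp le_B).
Qed.

Lemma run_matched j r : (forall i, i < j -> guess i <= l) ->
  run lcp_protocol A Bs r j.*2.+1 = nseq m true :: matched_rounds j r.
Proof.
elim: j => [|j IH] // le_guess.
rewrite doubleS run_round ?bob_match_short ?le_guess //.
by apply: IH => i lt_ij; apply/le_guess/ltnW.
Qed.

(* Bounds all values hashed, hence the number of coins the protocol reads. *)
Definition code_bound : nat :=
  (maxn (\max_(i < (size A).+1) pickle (take i A))
        (\max_(B <- Bs) \max_(i < (size B).+1) pickle (take i B))).+1.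

Lemma take_ord (X : seq T) L : exists i : 'I_(size X).+1, take L X = take i X.
Proof.
case: (leqP L (size X)) => [le_LX|lt_XL]; first by exists (Ordinal (le_LX : L < (size X).+1)).
by exists ord_max; rewrite /= take_size take_oversize // ltnW.
Qed.

Lemma pickle_take_ltA L : pickle (take L A) < code_bound.
Proof.
have [i ->] := take_ord A L; rewrite ltnS; apply: leq_trans (leq_maxl _ _).
exact: (leq_bigmax (F := fun i : 'I_(size A).+1 => pickle (take i A)) i).
Qed.

Lemma pickle_take_ltB B L : B \in Bs -> pickle (take L B) < code_bound.
Proof.
move=> BBs; have [i ->] := take_ord B L; rewrite ltnS; apply: leq_trans (leq_maxr _ _).
apply: leq_trans (leq_bigmax_seq _ BBs (isT : xpredT B)).
exact: (leq_bigmax (F := fun i : 'I_(size B).+1 => pickle (take i B)) i).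
Qed.

Lemma run_head r n :
  run lcp_protocol A Bs r n = [::] \/ head [::] (run lcp_protocol A Bs r n) = nseq m true.
Proof.
elim: n => [|n IH]; first by left.
rewrite runS; case: ifP => _ //; right.
by case: IH => [->|]; case: (run lcp_protocol A Bs r n).
Qed.

Lemma run_local n : prefix_local (m * code_bound) (fun r => run lcp_protocol A Bs r n).
Proof.
move=> r r' eq_r; elim: n => [|n IH] //; rewrite !runS -IH.
have le_m : size (head [::] (run lcp_protocol A Bs r n)) <= m.
  by case: (run_head r n) => ->; rewrite ?size_nseq.
set tr := run lcp_protocol A Bs r n in le_m *.
have hash_eq v : v < code_bound ->
    hash (size (head [::] tr)) v r = hash (size (head [::] tr)) v r'.
  by move=> lt_v; apply: (prefix_local_leq _ (@hash_local _ v)) eq_r; rewrite leq_mul // ltnW.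
rewrite /=; case: ifP => // _; congr rcons; case: ifP => _.
  by rewrite /alice_hash; case: ifP => // _; rewrite hash_eq ?pickle_take_ltA.
case: ifP => // _; congr [:: _]; rewrite /bob_match; congr andb.
by apply: eq_in_has => B BBs; rewrite hash_eq ?pickle_take_ltB.
Qed.

(* At most [lg (lg l) + 2] rounds of [lg k + O(1)] bits each. *)
Lemma lcp_protocol_ok j r : l < guess j -> (forall i, i < j -> guess i <= l) ->
  ~~ bob_match Bs m j r (alice_hash A m j r) ->
  run_okb lcp_protocol A Bs r (24 * (lg (lg l)).+1) (24 * (lg (lg l)).+1 * (lg (size Bs)).+1)
    (fun l' => l <= l' <= l ^ 2).
Proof.
move=> lt_l le_guess no_match.
have run_j := run_round (run_matched r le_guess); rewrite (negbTE no_match) in run_j.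
have halted : halt lcp_protocol r (run lcp_protocol A Bs r j.*2.+3).
  by rewrite run_j /= !size_rcons size_matched_rounds !oddS odd_double last_rcons.
have le_j := guess_index_bound le_guess.
have le_rounds : j.*2.+3 <= 24 * (lg (lg l)).+1 by rewrite -addnn; lia.
rewrite /run_okb -(subnKC le_rounds) run_halted //; apply/and3P; split => //.
  rewrite run_j comm_cons !comm_rcons size_nseq.
  by have := comm_matched_rounds j r; have := size_alice_hash j r; rewrite /m /hash_len /=; nia.
rewrite run_j /= !size_rcons size_matched_rounds -doubleS uphalf_double /=.
by rewrite pred_guess_leq_sqr // andbT -ltnS prednK // (leq_ltn_trans _ lt_l).
Qed.

Lemma false_match_count j : l < guess j ->
  coin_sum (m * code_bound) (fun r => bob_match Bs m j r (alice_hash A m j r))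
  <= size Bs * 2 ^ (m * code_bound.-1).
Proof.
move=> lt_l; case: (leqP (guess j) (size A)) => [le_A|lt_A]; last first.
  rewrite (eq_coin_sum _ (psi := fun _ => 0)) ?coin_sum_const // => r.
  by rewrite /bob_match /alice_hash leqNgt lt_A eqxx.
set u := pickle (take (guess j) A).
apply: leq_trans (leq_coin_sum _
  (psi := fun r => has (fun B => hash m (pickle (take (guess j) B)) r == hash m u r) Bs) _) _.
  by move=> r; rewrite /bob_match /alice_hash le_A; case: (_ != _); case: has.
apply: coin_sum_has => B BBs; apply: hash_collision_count.
- apply/negP => /eqP/(pcan_inj (@pickleK _)) eq_take.
  have := take_eq_leq_lcp le_A (esym eq_take); have := leq_lcp_maxlcp A BBs.
  by rewrite -/l; lia.
- exact: ltn_trans (pickle_take_ltB _ BBs) (ltn_expl _ (isT : 1 < 2)).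
- exact: ltn_trans (pickle_take_ltA _) (ltn_expl _ (isT : 1 < 2)).
Qed.

End LcpProtocol.

Lemma lcp_protocol_succ (R : realType) (T : countType) (A : seq T) (Bs : seq (seq T)) :
  let l := maxlcp A Bs in
  succ_prob_ge (lcp_protocol T) A Bs (24 * (lg (lg l)).+1)
    (24 * (lg (lg l)).+1 * (lg (size Bs)).+1) (fun l' => l <= l' <= l ^ 2) (3 / 4 : R)%R.
Proof.
move=> l; set m := hash_len (size Bs); set N := m * code_bound A Bs.
have [j lt_l min_j] := ex_minnP (ex_intro (fun j => l < guess j) _ (ltn_guess l)).
have le_guess i : i < j -> guess i <= l.
  by move=> lt_ij; rewrite leqNgt; apply/negP => /min_j; rewrite leqNgt lt_ij.
pose bad r := bob_match Bs m j r (alice_hash A m j r).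
pose ok r := run_okb (lcp_protocol T) A Bs r (24 * (lg (lg l)).+1)
  (24 * (lg (lg l)).+1 * (lg (size Bs)).+1) (fun l' => l <= l' <= l ^ 2).
apply: (@succ_prob_ge_of_coin_sum R T _ A Bs _ _ _ N 3 4) => //.
  by move=> r r' eq_r; rewrite /run_okb (run_local _ eq_r).
change (3 * 2 ^ N <= 4 * coin_sum N ok).
have le_good : coin_sum N (fun r => ~~ bad r) <= coin_sum N ok.
  apply: leq_coin_sum => r; rewrite /ok.
  by case: (boolP (bad r)) => // /(lcp_protocol_ok lt_l le_guess) ->.
have good_bad : coin_sum N (fun r => ~~ bad r) + coin_sum N bad = 2 ^ N.
  rewrite -coin_sumD (eq_coin_sum _ (psi := fun _ => 1)) ?coin_sum_const ?mul1n // => r.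
  by case: (bad r).
have le_bad : coin_sum N bad <= size Bs * 2 ^ (m * (code_bound A Bs).-1).
  exact: false_match_count.
have exp_N : 2 ^ N = 2 ^ m * 2 ^ (m * (code_bound A Bs).-1) by rewrite -expnD -mulnS.
have lt_k : size Bs < 2 ^ (lg (size Bs)).+1 := trunc_log_ltn _ (isT : 1 < 2).
have exp_m : 2 ^ m = 4 * 2 ^ (lg (size Bs)).+1 by rewrite /m /hash_len !expnS mulnA.
move: le_good good_bad le_bad exp_N lt_k exp_m; nia.
Qed.

Unset Implicit Arguments.
Local Open Scope ring_scope.

Theorem lemma11 (R : realType) (T : countType) :
  (* (1): l <= l' <= l^2, O(lg lg l) rounds, O(lg lg l * lg k) bits *)
  (exists (p : R) (C : nat), 1 / 2 < p /\
    exists P : protocol T, forall (A : seq T) (Bs : seq (seq T)),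
      (0 < size Bs)%N ->
      let l := maxlcp A Bs in
      succ_prob_ge P A Bs (C * (lg (lg l)).+1)
        (C * (lg (lg l)).+1 * (lg (size Bs)).+1)
        (fun l' => (l <= l' <= l ^ 2)%N) p)
  /\
  (* (2): l <= l' <= |A|^2, O(1) rounds, O(lg lg lg |A|) bits *)
  (exists (p : R) (C : nat), 1 / 2 < p /\
    exists P : protocol T, forall (A : seq T) (Bs : seq (seq T)),
      (0 < size Bs)%N ->
      let l := maxlcp A Bs in
      succ_prob_ge P A Bs C (C * (lg (lg (lg (size A)))).+1)
        (fun l' => (l <= l' <= (size A) ^ 2)%N) p).
Proof.
split.
- exists (3 / 4), 24%N; split; first by lra.
  by exists (lcp_protocol T) => A Bs _; apply: lcp_protocol_succ.
- exists 1, 3%N; split; first by lra.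
  by exists (size_protocol T) => A Bs _; apply: size_protocol_succ.
Qed.
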